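(* In a coherent differential summable resource category $\mathcal L$ (see context), let $X_0,\dots,X_n$ be objects and $X=X_0\&\cdots\&X_n$. Then, as morphisms $!SX_0\otimes\cdots\otimes!SX_n\to !X$, $$\pi_0\circ\partial_X\circ m^n_{SX_0,\dots,SX_n}=m^n_{X_0,\dots,X_n}\circ(!\pi_0\otimes\cdots\otimes!\pi_0),$$ $$\pi_1\circ\partial_X\circ m^n_{SX_0,\dots,SX_n}=m^n_{X_0,\dots,X_n}\circ\sum_{i=0}^n\big(!\pi_0\otimes\cdots\otimes!\pi_0\otimes(\pi_1\circ\partial_{X_i})\otimes!\pi_0\otimes\cdots\otimes!\pi_0\big),$$ where in the $i$-th summand the factor $\pi_1\circ\partial_{X_i}$ is in position $i$.
   Context: $\mathcal L$ is a symmetric monoidal closed category with finite products ($\&$, projections $p_i$, terminal $\top$), resource comonad $(!,\mathrm{der},\mathrm{dig})$ and Seely isomorphisms $m^0\in\mathcal L(1,!\top)$, $m^2$; $m^n_{X_0,\dots,X_n}\in\mathcal L(!X_0\otimes\cdots\otimes!X_n,!(X_0\&\cdots\&X_n))$ is the induced $(n+1)$-ary Seely isomorphism. $\mathcal L$ has zero morphisms and a summability structure $(S,\pi_0,\pi_1,\sigma)$ ($\pi_0,\pi_1,\sigma:S\Rightarrow\mathrm{Id}$ natural, jointly monic $\pi_0,\pi_1$, $f_0+f_1=\sigma\langle f_0,f_1\rangle$) satisfying the axioms of Ehrhard's coherent differentiation (homsets partial commutative monoids, composition and $\otimes$ distribute over defined sums); $\iota_0=\langle\mathrm{id},0\rangle$;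 $\tau$ with $\pi_0\tau=\pi_0\pi_0$, $\pi_1\tau=\pi_1\pi_0+\pi_0\pi_1$; flip $c$ with $\pi_i\pi_jc=\pi_j\pi_i$; $S$ preserves products strictly; $L_{X_0,X_1}\in\mathcal L(SX_0\otimes SX_1,S(X_0\otimes X_1))$ with $\pi_0L=\pi_0\otimes\pi_0$, $\pi_1L=\pi_1\otimes\pi_0+\pi_0\otimes\pi_1$ (and its $n$-ary generalisation $L_n$ with $\pi_0L_n=\pi_0\otimes\cdots\otimes\pi_0$, $\pi_1L_n=\sum_i\pi_0\otimes\cdots\otimes\pi_1\otimes\cdots\otimes\pi_0$). A natural $\partial_X\in\mathcal L(!SX,S!X)$ satisfies: $\pi_0\partial_X=!\pi_0$; $\partial_X\circ!\iota_0=\iota_0$, $\tau\circ S\partial_X\circ\partial_{SX}=\partial_X\circ!\tau$; $S\mathrm{der}_X\circ\partial_X=\mathrm{der}_{SX}$, $S\mathrm{dig}_X\circ\partial_X=\partial_{!X}\circ!\partial_X\circ\mathrm{dig}_{SX}$; $S(m^0)^{-1}\partial_\top=\iota_0(m^0)^{-1}!0$, $S(m^2_{X_0,X_1})^{-1}\partial_{X_0\&X_1}=L_{!X_0,!X_1}(\partial_{X_0}\otimes\partial_{X_1})(m^2_{SX_0,SX_1})^{-1}$; $c\circ S\partial_X\circ\partial_{SX}=S\partial_X\circ\partial_{SX}\circ!c$. *)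

From Stdlib Require Import List.
Import ListNotations.

Set Implicit Arguments.
Set Universe Polymorphism.

Record Category := {
  ob :> Type;
  hom : ob -> ob -> Type;
  comp : forall {X Y Z : ob}, hom Y Z -> hom X Y -> hom X Z;
  idm : forall {X : ob}, hom X X;
  comp_assoc : forall X Y Z W (f : hom X Y) (g : hom Y Z) (h : hom Z W),
      comp h (comp g f) = comp (comp h g) f;
  comp_id_l : forall X Y (f : hom X Y), comp idm f = f;
  comp_id_r : forall X Y (f : hom X Y), comp f idm = f
}.
Arguments hom {c} _ _.
Arguments comp {c X Y Z} _ _.
Arguments idm {c X}.

Declare Scope cat_scope.
Open Scope cat_scope.
Notation "g ∘ f" := (comp g f) (at level 40, left associativity) : cat_scope.

Class MonoidalOps (C : Category) := {
  tens : C -> C -> C;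
  tmap : forall {A B A' B' : C}, hom A A' -> hom B B' -> hom (tens A B) (tens A' B');
  unitI : C;
  assoc : forall A B D : C, hom (tens (tens A B) D) (tens A (tens B D));
  assoc_inv : forall A B D : C, hom (tens A (tens B D)) (tens (tens A B) D);
  lunit : forall A : C, hom (tens unitI A) A;
  lunit_inv : forall A : C, hom A (tens unitI A);
  runit : forall A : C, hom (tens A unitI) A;
  runit_inv : forall A : C, hom A (tens A unitI);
  sym : forall A B : C, hom (tens A B) (tens B A);
  lolli : C -> C -> C;
  ev : forall A B : C, hom (tens (lolli A B) A) B;
  cur : forall {D A B : C}, hom (tens D A) B -> hom D (lolli A B)
}.
Notation "A ⊗ B" := (tens A B) (at level 34, right associativity) : cat_scope.

Class MonoidalLaws (C : Category) `{MonoidalOps C} := {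
  tmap_id : forall A B : C, tmap (@idm C A) (@idm C B) = idm;
  tmap_comp : forall (A B A' B' A'' B'' : C) (f : hom A A') (g : hom A' A'')
      (f' : hom B B') (g' : hom B' B''), tmap (g ∘ f) (g' ∘ f') = tmap g g' ∘ tmap f f';
  assoc_nat : forall (A B D A' B' D' : C) (f : hom A A') (g : hom B B') (h : hom D D'),
      assoc A' B' D' ∘ tmap (tmap f g) h = tmap f (tmap g h) ∘ assoc A B D;
  assoc_iso1 : forall A B D : C, assoc_inv A B D ∘ assoc A B D = idm;
  assoc_iso2 : forall A B D : C, assoc A B D ∘ assoc_inv A B D = idm;
  lunit_nat : forall (A B : C) (f : hom A B), f ∘ lunit A = lunit B ∘ tmap idm f;
  lunit_iso1 : forall A : C, lunit_inv A ∘ lunit A = idm;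
  lunit_iso2 : forall A : C, lunit A ∘ lunit_inv A = idm;
  runit_nat : forall (A B : C) (f : hom A B), f ∘ runit A = runit B ∘ tmap f idm;
  runit_iso1 : forall A : C, runit_inv A ∘ runit A = idm;
  runit_iso2 : forall A : C, runit A ∘ runit_inv A = idm;
  sym_nat : forall (A B A' B' : C) (f : hom A A') (g : hom B B'),
      sym A' B' ∘ tmap f g = tmap g f ∘ sym A B;
  sym_invol : forall A B : C, sym B A ∘ sym A B = idm;
  pentagon : forall A B D E : C,
      assoc A B (D ⊗ E) ∘ assoc (A ⊗ B) D E
      = tmap idm (assoc B D E) ∘ assoc A (B ⊗ D) E ∘ tmap (assoc A B D) idm;
  triangle : forall A B : C,
      tmap idm (lunit B) ∘ assoc A unitI B = tmap (runit A) idm;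
  hexagon : forall A B D : C,
      assoc B D A ∘ sym A (B ⊗ D) ∘ assoc A B D
      = tmap idm (sym A D) ∘ assoc B A D ∘ tmap (sym A B) idm;
  ev_cur : forall (D A B : C) (f : hom (D ⊗ A) B), ev A B ∘ tmap (cur f) idm = f;
  cur_ev : forall (D A B : C) (g : hom D (lolli A B)), cur (ev A B ∘ tmap g idm) = g
}.

Class CartOps (C : Category) := {
  top : C;
  term : forall X : C, hom X top;
  cprod : C -> C -> C;
  p0 : forall X Y : C, hom (cprod X Y) X;
  p1 : forall X Y : C, hom (cprod X Y) Y;
  pair : forall {Z X Y : C}, hom Z X -> hom Z Y -> hom Z (cprod X Y)
}.
Notation "A & B" := (cprod A B) (at level 35, right associativity) : cat_scope.
Notation "⟨ f , g ⟩" := (pair f g) : cat_scope.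

Class CartLaws (C : Category) `{CartOps C} := {
  term_unique : forall (X : C) (f : hom X top), f = term X;
  p0_pair : forall (Z X Y : C) (f : hom Z X) (g : hom Z Y), p0 X Y ∘ ⟨f, g⟩ = f;
  p1_pair : forall (Z X Y : C) (f : hom Z X) (g : hom Z Y), p1 X Y ∘ ⟨f, g⟩ = g;
  pair_eta : forall (Z X Y : C) (h : hom Z (X & Y)), ⟨p0 X Y ∘ h, p1 X Y ∘ h⟩ = h
}.

Definition pmap {C : Category} `{CartOps C} {X Y X' Y' : C}
  (f : hom X X') (g : hom Y Y') : hom (X & Y) (X' & Y') :=
  ⟨f ∘ p0 X Y, g ∘ p1 X Y⟩.

Class ResourceOps (C : Category) `{MonoidalOps C} `{CartOps C} := {
  bang : C -> C;
  bmap : forall {X Y : C}, hom X Y -> hom (bang X) (bang Y);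
  der : forall X : C, hom (bang X) X;
  dig : forall X : C, hom (bang X) (bang (bang X));
  m0 : hom unitI (bang top);
  m0_inv : hom (bang top) unitI;
  m2 : forall X Y : C, hom (bang X ⊗ bang Y) (bang (X & Y));
  m2_inv : forall X Y : C, hom (bang (X & Y)) (bang X ⊗ bang Y)
}.
Notation "! X" := (bang X) (at level 30, right associativity) : cat_scope.

Class ResourceLaws (C : Category) `{HM : MonoidalOps C} `{HC : CartOps C} `{HR : @ResourceOps C HM HC} := {
  bmap_id : forall X : C, bmap (@idm C X) = idm;
  bmap_comp : forall (X Y Z : C) (f : hom X Y) (g : hom Y Z), bmap (g ∘ f) = bmap g ∘ bmap f;
  der_nat : forall (X Y : C) (f : hom X Y), f ∘ der X = der Y ∘ bmap f;
  dig_nat : forall (X Y : C) (f : hom X Y), bmap (bmap f) ∘ dig X = dig Y ∘ bmap f;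
  comonad_l : forall X : C, der (! X) ∘ dig X = idm;
  comonad_r : forall X : C, bmap (der X) ∘ dig X = idm;
  comonad_assoc : forall X : C, dig (! X) ∘ dig X = bmap (dig X) ∘ dig X;
  m0_iso1 : m0_inv ∘ m0 = idm;
  m0_iso2 : m0 ∘ m0_inv = idm;
  m2_iso1 : forall X Y : C, m2_inv X Y ∘ m2 X Y = idm;
  m2_iso2 : forall X Y : C, m2 X Y ∘ m2_inv X Y = idm;
  m2_nat : forall (X Y X' Y' : C) (f : hom X X') (g : hom Y Y'),
      m2 X' Y' ∘ tmap (bmap f) (bmap g) = bmap (pmap f g) ∘ m2 X Y;
  (* (!, m0, m2) is a strong symmetric monoidal functor (L,&,top) -> (L,⊗,1) *)
  seely_assoc : forall X Y Z : C,
      bmap ⟨p0 X Y ∘ p0 (X & Y) Z, ⟨p1 X Y ∘ p0 (X & Y) Z, p1 (X & Y) Z⟩⟩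
        ∘ m2 (X & Y) Z ∘ tmap (m2 X Y) idm
      = m2 X (Y & Z) ∘ tmap idm (m2 Y Z) ∘ assoc (! X) (! Y) (! Z);
  seely_lunit : forall X : C, bmap (p1 top X) ∘ m2 top X ∘ tmap m0 idm = lunit (! X);
  seely_runit : forall X : C, bmap (p0 X top) ∘ m2 X top ∘ tmap idm m0 = runit (! X);
  seely_sym : forall X Y : C,
      bmap ⟨p1 X Y, p0 X Y⟩ ∘ m2 X Y = m2 Y X ∘ sym (! X) (! Y);
  seely_dig2 : forall X Y : C,
      bmap ⟨bmap (p0 X Y), bmap (p1 X Y)⟩ ∘ dig (X & Y) ∘ m2 X Y
      = m2 (! X) (! Y) ∘ tmap (dig X) (dig Y);
  seely_dig0 : bmap (term (! top)) ∘ dig top ∘ m0 = m0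
}.

Class SumOps (C : Category) `{MonoidalOps C} `{CartOps C} := {
  zero : forall X Y : C, hom X Y;
  Sob : C -> C;
  Smap : forall {X Y : C}, hom X Y -> hom (Sob X) (Sob Y);
  pi0 : forall X : C, hom (Sob X) X;
  pi1 : forall X : C, hom (Sob X) X;
  sig : forall X : C, hom (Sob X) X;
  iota0 : forall X : C, hom X (Sob X);
  tau : forall X : C, hom (Sob (Sob X)) (Sob X);
  flip : forall X : C, hom (Sob (Sob X)) (Sob (Sob X));
  Lmor : forall X Y : C, hom (Sob X ⊗ Sob Y) (Sob (X ⊗ Y));
  (* inverse of <S p0, S p1> : S(X & Y) -> SX & SY  (S preserves products) *)
  Sprod : forall X Y : C, hom (Sob X & Sob Y) (Sob (X & Y));
  (* inverse of the terminal map S top -> top *)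
  Stop : hom top (Sob top)
}.

(* [sum_is f g h] : f and g are summable and f + g = h, i.e. there is
   w = <f,g> with pi0 w = f, pi1 w = g, and h = sigma w. *)
Definition sum_is {C : Category} `{HM : MonoidalOps C} `{HC : CartOps C} `{HS : @SumOps C HM HC}
  {X Y : C} (f g h : hom X Y) : Prop :=
  exists w : hom X (Sob Y), pi0 Y ∘ w = f /\ pi1 Y ∘ w = g /\ sig Y ∘ w = h.

Inductive sum_list {C : Category} `{HM : MonoidalOps C} `{HC : CartOps C} `{HS : @SumOps C HM HC}
  {X Y : C} : list (hom X Y) -> hom X Y -> Prop :=
| sum_nil : sum_list [] (zero X Y)
| sum_cons : forall f fs s h, sum_list fs s -> sum_is f s h -> sum_list (f :: fs) h.

Class SumLaws (C : Category) `{HM : MonoidalOps C} `{HC : CartOps C} `{HS : @SumOps C HM HC} := {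
  zero_comp_l : forall (X Y Z : C) (g : hom Y Z), g ∘ zero X Y = zero X Z;
  zero_comp_r : forall (X Y Z : C) (f : hom X Y), zero Y Z ∘ f = zero X Z;
  Smap_id : forall X : C, Smap (@idm C X) = idm;
  Smap_comp : forall (X Y Z : C) (f : hom X Y) (g : hom Y Z), Smap (g ∘ f) = Smap g ∘ Smap f;
  pi0_nat : forall (X Y : C) (f : hom X Y), pi0 Y ∘ Smap f = f ∘ pi0 X;
  pi1_nat : forall (X Y : C) (f : hom X Y), pi1 Y ∘ Smap f = f ∘ pi1 X;
  sig_nat : forall (X Y : C) (f : hom X Y), sig Y ∘ Smap f = f ∘ sig X;
  pi_jointly_monic : forall (X Y : C) (h h' : hom X (Sob Y)),
      pi0 Y ∘ h = pi0 Y ∘ h' -> pi1 Y ∘ h = pi1 Y ∘ h' -> h = h';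
  sum_zero : forall (X Y : C) (f : hom X Y), sum_is f (zero X Y) f;
  sum_comm : forall (X Y : C) (f g h : hom X Y), sum_is f g h -> sum_is g f h;
  sum_assoc : forall (X Y : C) (f g k h l : hom X Y),
      sum_is f g h -> sum_is h k l -> exists m, sum_is g k m /\ sum_is f m l;
  tmap_sum_l : forall (A B A' B' : C) (f0 f1 h : hom A A') (g : hom B B'),
      sum_is f0 f1 h -> sum_is (tmap f0 g) (tmap f1 g) (tmap h g);
  tmap_sum_r : forall (A B A' B' : C) (f : hom A A') (g0 g1 h : hom B B'),
      sum_is g0 g1 h -> sum_is (tmap f g0) (tmap f g1) (tmap f h);
  tmap_zero_l : forall (A B A' B' : C) (g : hom B B'), tmap (zero A A') g = zero _ _;
  tmap_zero_r : forall (A B A' B' : C) (f : hom A A'), tmap f (zero B B') = zero _ _;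
  iota0_pi0 : forall X : C, pi0 X ∘ iota0 X = idm;
  iota0_pi1 : forall X : C, pi1 X ∘ iota0 X = zero X X;
  tau_pi0 : forall X : C, pi0 X ∘ tau X = pi0 X ∘ pi0 (Sob X);
  tau_pi1 : forall X : C, sum_is (pi1 X ∘ pi0 (Sob X)) (pi0 X ∘ pi1 (Sob X)) (pi1 X ∘ tau X);
  flip_00 : forall X : C, pi0 X ∘ pi0 (Sob X) ∘ flip X = pi0 X ∘ pi0 (Sob X);
  flip_01 : forall X : C, pi0 X ∘ pi1 (Sob X) ∘ flip X = pi1 X ∘ pi0 (Sob X);
  flip_10 : forall X : C, pi1 X ∘ pi0 (Sob X) ∘ flip X = pi0 X ∘ pi1 (Sob X);
  flip_11 : forall X : C, pi1 X ∘ pi1 (Sob X) ∘ flip X = pi1 X ∘ pi1 (Sob X);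
  L_pi0 : forall X Y : C, pi0 (X ⊗ Y) ∘ Lmor X Y = tmap (pi0 X) (pi0 Y);
  L_pi1 : forall X Y : C,
      sum_is (tmap (pi1 X) (pi0 Y)) (tmap (pi0 X) (pi1 Y)) (pi1 (X ⊗ Y) ∘ Lmor X Y);
  Sprod_iso1 : forall X Y : C, ⟨Smap (p0 X Y), Smap (p1 X Y)⟩ ∘ Sprod X Y = idm;
  Sprod_iso2 : forall X Y : C, Sprod X Y ∘ ⟨Smap (p0 X Y), Smap (p1 X Y)⟩ = idm;
  Stop_iso : Stop ∘ term (Sob top) = idm
}.

Class DiffOps (C : Category) `{HM : MonoidalOps C} `{HC : CartOps C} `{HR : @ResourceOps C HM HC} `{HS : @SumOps C HM HC} := {
  dS : forall X : C, hom (! (Sob X)) (Sob (! X))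
}.

Class DiffLaws (C : Category) `{HM : MonoidalOps C} `{HC : CartOps C} `{HR : @ResourceOps C HM HC}
  `{HS : @SumOps C HM HC} `{HD : @DiffOps C HM HC HR HS} := {
  dS_nat : forall (X Y : C) (f : hom X Y), dS Y ∘ bmap (Smap f) = Smap (bmap f) ∘ dS X;
  dS_pi0 : forall X : C, pi0 (! X) ∘ dS X = bmap (pi0 X);
  dS_iota0 : forall X : C, dS X ∘ bmap (iota0 X) = iota0 (! X);
  dS_tau : forall X : C,
      tau (! X) ∘ Smap (dS X) ∘ dS (Sob X) = dS X ∘ bmap (tau X);
  dS_der : forall X : C, Smap (der X) ∘ dS X = der (Sob X);
  dS_dig : forall X : C,
      Smap (dig X) ∘ dS X = dS (! X) ∘ bmap (dS X) ∘ dig (Sob X);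
  dS_m0 : Smap m0_inv ∘ dS top = iota0 unitI ∘ m0_inv ∘ bmap (zero (Sob top) top);
  dS_m2 : forall X0 X1 : C,
      Smap (m2_inv X0 X1) ∘ dS (X0 & X1) ∘ bmap (Sprod X0 X1)
      = Lmor (! X0) (! X1) ∘ tmap (dS X0) (dS X1) ∘ m2_inv (Sob X0) (Sob X1);
  dS_flip : forall X : C,
      flip (! X) ∘ Smap (dS X) ∘ dS (Sob X) = Smap (dS X) ∘ dS (Sob X) ∘ bmap (flip X)
}.

Record CDSRC := {
  Ccat :> Category;
  Cmon_ops : MonoidalOps Ccat;
  Cmon_laws : @MonoidalLaws Ccat Cmon_ops;
  Ccart_ops : CartOps Ccat;
  Ccart_laws : @CartLaws Ccat Ccart_ops;
  Cres_ops : @ResourceOps Ccat Cmon_ops Ccart_ops;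
  Cres_laws : @ResourceLaws Ccat Cmon_ops Ccart_ops Cres_ops;
  Csum_ops : @SumOps Ccat Cmon_ops Ccart_ops;
  Csum_laws : @SumLaws Ccat Cmon_ops Ccart_ops Csum_ops;
  Cdiff_ops : @DiffOps Ccat Cmon_ops Ccart_ops Cres_ops Csum_ops;
  Cdiff_laws : @DiffLaws Ccat Cmon_ops Ccart_ops Cres_ops Csum_ops Cdiff_ops
}.
#[global] Existing Instance Cmon_ops.
#[global] Existing Instance Cmon_laws.
#[global] Existing Instance Ccart_ops.
#[global] Existing Instance Ccart_laws.
#[global] Existing Instance Cres_ops.
#[global] Existing Instance Cres_laws.
#[global] Existing Instance Csum_ops.
#[global] Existing Instance Csum_laws.
#[global] Existing Instance Cdiff_ops.
#[global] Existing Instance Cdiff_laws.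

(* n-ary constructions, for a family X : nat -> C indexed by 0..n      *)
Section Nary.
Context {C : Category} `{HM : MonoidalOps C} `{HC : CartOps C} `{HR : @ResourceOps C HM HC} `{HS : @SumOps C HM HC}.

Definition shift (X : nat -> C) : nat -> C := fun i => X (S i).

Fixpoint withN (n : nat) (X : nat -> C) : C :=
  match n with
  | O => X O
  | S n' => X O & withN n' (shift X)
  end.

Fixpoint tensN (n : nat) (A : nat -> C) : C :=
  match n with
  | O => A O
  | S n' => A O ⊗ tensN n' (shift A)
  end.

Fixpoint tensN_map (n : nat) (A B : nat -> C) (f : forall i, hom (A i) (B i))
  : hom (tensN n A) (tensN n B) :=
  match n return hom (tensN n A) (tensN n B) with
  | O => f O
  | S n' => tmap (f O) (tensN_map n' (shift A) (shift B) (fun i => f (S i)))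
  end.

Fixpoint seelyN (n : nat) (X : nat -> C)
  : hom (tensN n (fun i => ! X i)) (! withN n X) :=
  match n return hom (tensN n (fun i => ! X i)) (! withN n X) with
  | O => idm
  | S n' => m2 (X O) (withN n' (shift X)) ∘ tmap idm (seelyN n' (shift X))
  end.

(* the canonical iso SX0 & ... & SXn -> S(X0 & ... & Xn) (S preserves products);
   the paper treats it as an identity ("S preserves products strictly"). *)
Fixpoint SprodN (n : nat) (X : nat -> C)
  : hom (withN n (fun i => Sob (X i))) (Sob (withN n X)) :=
  match n return hom (withN n (fun i => Sob (X i))) (Sob (withN n X)) with
  | O => idm
  | S n' => Sprod (X O) (withN n' (shift X)) ∘ pmap idm (SprodN n' (shift X))
  end.
End Nary.

(* By induction on n, the Seely compatibility of ∂ and the naturality of L give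
   ∂_X ∘ !(SprodN) ∘ m^n_{SX} = S m^n_X ∘ L_n ∘ (∂_{X_0} ⊗ ⋯ ⊗ ∂_{X_n}).
   Both equations then follow by post-composing with π0 and π1, which are
   computed on L_n ∘ (∂ ⊗ ⋯ ⊗ ∂) from π0 L = π0 ⊗ π0, π1 L = π1 ⊗ π0 + π0 ⊗ π1
   and π0 ∂ = !π0. *)
From Stdlib Require Import List.

Section CoherentDifferentiation.
Context (L : CDSRC).

Lemma sum_is_comp_r {A B D : ob L} {f g h : hom B D} (k : hom A B) :
  sum_is f g h -> sum_is (f ∘ k) (g ∘ k) (h ∘ k).
Proof.
  intros [w [Hf [Hg Hh]]]. exists (w ∘ k).
  rewrite !comp_assoc, Hf, Hg, Hh. auto.
Qed.

Lemma sum_is_comp_l {A B D : ob L} {f g h : hom A B} (k : hom B D) :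
  sum_is f g h -> sum_is (k ∘ f) (k ∘ g) (k ∘ h).
Proof.
  intros [w [Hf [Hg Hh]]]. exists (Smap k ∘ w).
  rewrite !comp_assoc, pi0_nat, pi1_nat, sig_nat, <- !comp_assoc, Hf, Hg, Hh. auto.
Qed.

Lemma sum_is_unique {A B : ob L} {f g h h' : hom A B} :
  sum_is f g h -> sum_is f g h' -> h = h'.
Proof.
  intros [w [Hf [Hg Hh]]] [w' [Hf' [Hg' Hh']]].
  assert (w = w') as <- by (apply pi_jointly_monic; congruence).
  congruence.
Qed.

Lemma sum_list_tmap_l {A B A' B' : ob L} (h : hom A A') {fs : list (hom B B')} {s} :
  sum_list fs s -> sum_list (map (tmap h) fs) (tmap h s).
Proof.
  induction 1; simpl.
  - rewrite tmap_zero_r. constructor.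
  - econstructor; [eassumption|]. apply tmap_sum_r. assumption.
Qed.

Lemma Lmor_nat (A B A' B' : ob L) (f : hom A A') (g : hom B B') :
  Smap (tmap f g) ∘ Lmor A B = Lmor A' B' ∘ tmap (Smap f) (Smap g).
Proof.
  apply pi_jointly_monic.
  - rewrite !comp_assoc, pi0_nat, L_pi0, <- comp_assoc, L_pi0, <- !tmap_comp, !pi0_nat.
    reflexivity.
  - rewrite !comp_assoc, pi1_nat.
    pose proof (sum_is_comp_l (tmap f g) (L_pi1 A B)) as Hleft.
    pose proof (sum_is_comp_r (tmap (Smap f) (Smap g)) (L_pi1 A' B')) as Hright.
    rewrite <- !tmap_comp in Hleft, Hright. rewrite !pi0_nat, !pi1_nat in Hright.
    rewrite <- comp_assoc. exact (sum_is_unique Hleft Hright).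
Qed.

Lemma m2_nat_r (A B B' : ob L) (g : hom B B') :
  bmap (pmap idm g) ∘ m2 A B = m2 A B' ∘ tmap idm (bmap g).
Proof. rewrite <- m2_nat, bmap_id. reflexivity. Qed.

Lemma dS_Sprod_m2 (X0 X1 : ob L) :
  dS (X0 & X1) ∘ bmap (Sprod X0 X1) ∘ m2 (Sob X0) (Sob X1)
  = Smap (m2 X0 X1) ∘ Lmor _ _ ∘ tmap (dS X0) (dS X1).
Proof.
  transitivity (Smap (m2 X0 X1)
                ∘ (Smap (m2_inv X0 X1) ∘ dS (X0 & X1) ∘ bmap (Sprod X0 X1))
                ∘ m2 (Sob X0) (Sob X1)).
  - rewrite !comp_assoc, <- Smap_comp, m2_iso2, Smap_id, comp_id_l. reflexivity.
  - rewrite dS_m2, <- !comp_assoc, m2_iso1, comp_id_r. reflexivity.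
Qed.

Fixpoint dS_tensN (n : nat) (X : nat -> ob L) :
  hom (tensN n (fun i => ! Sob (X i))) (Sob (tensN n (fun i => ! X i))) :=
  match n return hom (tensN n (fun i => ! Sob (X i))) (Sob (tensN n (fun i => ! X i))) with
  | O => dS (X O)
  | S n' => Lmor _ _ ∘ tmap (dS (X O)) (dS_tensN n' (shift X))
  end.

Lemma pi0_dS_tensN n : forall X,
  pi0 _ ∘ dS_tensN n X
  = tensN_map n (fun i => ! Sob (X i)) (fun i => ! X i) (fun j => bmap (pi0 (X j))).
Proof.
  induction n as [|n IHn]; intros X; simpl.
  - apply dS_pi0.
  - rewrite comp_assoc, L_pi0, <- tmap_comp, dS_pi0, IHn. reflexivity.
Qed.

Lemma pi1_dS_tensN_sum n : forall X,
  sum_list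
    (map (fun i =>
            tensN_map n (fun i => ! Sob (X i)) (fun i => ! X i)
              (fun j => if Nat.eqb j i then pi1 (! X j) ∘ dS (X j)
                        else bmap (pi0 (X j))))
         (seq 0 (S n)))
    (pi1 _ ∘ dS_tensN n X).
Proof.
  induction n as [|n IHn]; intros X.
  - econstructor; [constructor|]. apply sum_zero.
  - change (seq 0 (S (S n))) with (0 :: seq 1 (S n)).
    rewrite <- seq_shift. cbn [map]. rewrite map_map.
    econstructor.
    + pose proof (sum_list_tmap_l (bmap (pi0 (X 0))) (IHn (shift X))) as Htail.
      rewrite map_map in Htail. exact Htail.
    + cbn [dS_tensN]. rewrite comp_assoc.
      pose proof (sum_is_comp_r (tmap (dS (X 0)) (dS_tensN n (shift X))) (L_pi1 _ _)) as Hhead.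
      rewrite <- !tmap_comp, dS_pi0, pi0_dS_tensN in Hhead. exact Hhead.
Qed.

Lemma dS_seelyN n : forall X,
  dS (withN n X) ∘ (bmap (SprodN n X) ∘ seelyN n (fun i => Sob (X i)))
  = Smap (seelyN n X) ∘ dS_tensN n X.
Proof.
  induction n as [|n IHn]; intros X; simpl.
  - rewrite bmap_id, !comp_id_r, Smap_id, comp_id_l. reflexivity.
  - set (Y := withN n (shift X)).
    set (P := SprodN n (shift X)).
    set (Q := seelyN n (fun i => Sob (shift X i))).
    transitivity (dS (X 0 & Y) ∘ bmap (Sprod (X 0) Y) ∘ m2 (Sob (X 0)) (Sob Y)
                  ∘ tmap idm (bmap P) ∘ tmap idm Q).
    { rewrite bmap_comp, !comp_assoc. f_equal.
      rewrite <- !comp_assoc, m2_nat_r. reflexivity. }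
    rewrite dS_Sprod_m2, <- !comp_assoc, <- !tmap_comp, !comp_id_r, IHn.
    rewrite Smap_comp, <- comp_assoc. f_equal.
    rewrite comp_assoc, Lmor_nat, Smap_id, <- comp_assoc, <- tmap_comp, comp_id_l.
    reflexivity.
Qed.

End CoherentDifferentiation.

Theorem mainTheorem15 (L : CDSRC) (n : nat) (X : nat -> ob L) :
  (* pi0 ∘ ∂_X ∘ m^n_{SX0..SXn} = m^n_{X0..Xn} ∘ (!pi0 ⊗ ... ⊗ !pi0) *)
  pi0 (! withN n X) ∘ dS (withN n X) ∘ bmap (SprodN n X)
      ∘ seelyN n (fun i => Sob (X i))
    = seelyN n X
      ∘ tensN_map n (fun i => ! Sob (X i)) (fun i => ! X i) (fun j => bmap (pi0 (X j)))
  /\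
  (* pi1 ∘ ∂_X ∘ m^n_{SX0..SXn}
       = m^n_{X0..Xn} ∘ Σ_{i=0}^n (!pi0 ⊗ .. ⊗ (pi1 ∘ ∂_{Xi}) ⊗ .. ⊗ !pi0) *)
  exists s : hom (tensN n (fun i => ! Sob (X i))) (tensN n (fun i => ! X i)),
    sum_list
      (map (fun i =>
              tensN_map n (fun i => ! Sob (X i)) (fun i => ! X i)
                (fun j => if Nat.eqb j i then pi1 (! X j) ∘ dS (X j)
                          else bmap (pi0 (X j))))
           (seq 0 (S n)))
      s
    /\ pi1 (! withN n X) ∘ dS (withN n X) ∘ bmap (SprodN n X)
         ∘ seelyN n (fun i => Sob (X i))
       = seelyN n X ∘ s.
Proof.
  rewrite <- !comp_assoc, (dS_seelyN L), !comp_assoc, pi0_nat, pi1_nat,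
    <- !comp_assoc, (pi0_dS_tensN L).
  split; [reflexivity|].
  exists (pi1 _ ∘ dS_tensN L n X).
  split; [apply pi1_dS_tensN_sum | reflexivity].
Qed.
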